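(* Let $M \in \{0,1\}^{n \times n}$ be a binary matrix given together with a rectangle-decomposition $\mathcal{R}$ of $M$. Then for an arbitrary column vector $v \in \mathbb{R}^n$, the products $Mv$ and $v^\intercal M$ can be computed in time $\mathcal{O}(n + |\mathcal{R}|)$.
   Context: Running times assume unit-cost arithmetic operations on scalars. A $1$-rectangle of $M$ is a contiguous submatrix (a set $[a,b]\times[c,d]$ of positions, i.e. the intersection of a set of consecutive rows and a set of consecutive columns) all of whose entries are $1$. A rectangle-decomposition of $M$ is a collection of pairwise disjoint $1$-rectangles whose union is exactly the set of positions of $1$-entries of $M$; each rectangle is given by its four integer coordinates $a\le b$, $c\le d$. *)

From mathcomp Require Import all_boot all_algebra.
From mathcomp Require Import reals.
Set Implicit Arguments. Unset Strict Implicit. Unset Printing Implicit Defensive.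
Import GRing.Theory Num.Theory.
Local Open Scope ring_scope.

(* A rectangle Rect a b c d denotes the positions [a,b] x [c,d]:       *)
(* rows a..b, columns c..d.                                            *)
Record rect := Rect { ra : nat; rb : nat; rc : nat; rd : nat }.

Definition rect0 := Rect 0 0 0 0.

Definition in_rect (r : rect) (i j : nat) : bool :=
  [&& (ra r <= i)%N, (i <= rb r)%N, (rc r <= j)%N & (j <= rd r)%N].

Definition is_rect_decomp (n : nat) (M : 'M[bool]_n) (rs : seq rect) : Prop :=
  (forall k, (k < size rs)%N ->
     let r := nth rect0 rs k in
     [&& (ra r <= rb r)%N, (rb r < n)%N, (rc r <= rd r)%N & (rd r < n)%N])
  /\ (forall k, (k < size rs)%N -> forall i j : 'I_n,
        in_rect (nth rect0 rs k) i j -> M i j)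
  /\ (forall k l, (k < l)%N -> (l < size rs)%N -> forall i j : nat,
        ~~ (in_rect (nth rect0 rs k) i j && in_rect (nth rect0 rs l) i j))
  /\ (forall i j : 'I_n, M i j ->
        exists2 k, (k < size rs)%N & in_rect (nth rect0 rs k) i j).

Definition mx01 (R : realType) (n : nat) (M : 'M[bool]_n) : 'M[R]_n :=
  map_mx (fun b : bool => (b%:R : R)) M.

(* Computational model: a real RAM with unit-cost operations.         *)
(* Two memories: a nat-valued one (indices, input coordinates) and a  *)
(* real-valued one.  Direct addresses are program constants; arrays   *)
(* are accessed by indirect addressing through nat cells.             *)
Inductive instr :=
| Halt
| NCst  (d k : nat)
| NAdd  (d x y : nat)
| NSub  (d x y : nat)      (* N[d] := N[x] - N[y]  (truncated) *)
| NLoad (d x : nat)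
| NStore (x y : nat)
| RZero (d : nat)
| RAdd  (d x y : nat)
| RSub  (d x y : nat)
| RMul  (d x y : nat)
| RLoad (d x : nat)
| RStore (x y : nat)
| JmpLe (x y t : nat).

Definition program := seq instr.

Record config (R : Type) := Cfg { pc : nat; nmem : nat -> nat; rmem : nat -> R }.

Definition upd {T : Type} (f : nat -> T) (a : nat) (v : T) : nat -> T :=
  fun b => if b == a then v else f b.

(* one step; None means the machine has halted (Halt or pc out of range) *)
Definition step (R : realType) (P : program) (c : config R) : option (config R) :=
  let p := pc c in let N := nmem c in let X := rmem c in
  match nth Halt P p with
  | Halt => None
  | NCst d k => Some (Cfg p.+1 (upd N d k) X)
  | NAdd d x y => Some (Cfg p.+1 (upd N d (N x + N y)%N) X)
  | NSub d x y => Some (Cfg p.+1 (upd N d (N x - N y)%N) X)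
  | NLoad d x => Some (Cfg p.+1 (upd N d (N (N x))) X)
  | NStore x y => Some (Cfg p.+1 (upd N (N x) (N y)) X)
  | RZero d => Some (Cfg p.+1 N (upd X d 0))
  | RAdd d x y => Some (Cfg p.+1 N (upd X d (X x + X y)))
  | RSub d x y => Some (Cfg p.+1 N (upd X d (X x - X y)))
  | RMul d x y => Some (Cfg p.+1 N (upd X d (X x * X y)))
  | RLoad d x => Some (Cfg p.+1 N (upd X d (X (N x))))
  | RStore x y => Some (Cfg p.+1 N (upd X (N x) (X y)))
  | JmpLe x y t => Some (Cfg (if (N x <= N y)%N then t else p.+1) N X)
  end.

(* run P t c = Some c' iff the machine started in c halts in configuration
   c' after executing at most t instructions. *)
Fixpoint run (R : realType) (P : program) (t : nat) (c : config R)
  : option (config R) :=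
  match step P c with
  | None => Some c
  | Some c' => if t is t'.+1 then run P t' c' else None
  end.

(* Input encoding: N[0] = n, N[1] = |R|, N[2+4k..2+4k+3] = (a,b,c,d) of the
   k-th rectangle, all other nat cells 0; Re[j] = v_j for j < n, other real
   cells 0; execution starts at pc = 0. *)
Definition nat_input (n : nat) (rs : seq rect) : nat -> nat :=
  fun m =>
    if m == 0%N then n
    else if m == 1%N then size rs
    else let k := ((m - 2) %/ 4)%N in
         if (k < size rs)%N then
           let r := nth rect0 rs k in
           match ((m - 2) %% 4)%N with
           | 0 => ra r | 1 => rb r | 2 => rc r | _ => rd r end
         else 0%N.

Definition real_input (R : realType) (n : nat) (v : 'I_n -> R) : nat -> R :=
  fun m => if (insub m : option 'I_n) is Some i then v i else 0.

Definition init (R : realType) (n : nat) (rs : seq rect) (v : 'I_n -> R)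
  : config R := Cfg 0 (nat_input n rs) (real_input v).

(* Output convention: after halting, Re[j] holds the j-th output entry. *)

From mathcomp Require Import all_boot all_algebra.
From mathcomp Require Import reals.
From mathcomp Require Import zify.
Set Implicit Arguments. Unset Strict Implicit. Unset Printing Implicit Defensive.
Import GRing.Theory Num.Theory.
Local Open Scope ring_scope.

(* Since the rectangles are disjoint and cover the 1-entries of M, the entry (M v)_j is the sum,
   over the rectangles [a,b] x [c,d] with a <= j <= b, of v_c + ... + v_d.  With the prefix sums
   P_k = v_0 + ... + v_(k-1), computed in O(n), each such range sum is P_(d+1) - P_c, one
   subtraction.  It has to be added to the entries a, ..., b of the result; this is done in O(1)
   on a difference array (add it at a, subtract it at b+1), whose prefix sums, computed in O(n),
   are the entries of M v.  Since v^T M = (M^T v)^T and M^T is decomposed by the transposed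
   rectangles, the same program with rows and columns exchanged computes v^T M. *)

Section PrefixSums.
Variable V : zmodType.
Implicit Types (x : nat -> V) (lo hi : nat -> nat) (s : nat -> V).

Definition psum x i := \sum_(0 <= k < i) x k.

Lemma psum0 x : psum x 0 = 0.
Proof. by rewrite /psum big_geq. Qed.

Lemma psumS x i : psum x i.+1 = psum x i + x i.
Proof. by rewrite /psum big_nat_recr. Qed.

Lemma psumB x a b : (a <= b)%N -> psum x b - psum x a = \sum_(a <= i < b) x i.
Proof. by move=> le_ab; rewrite /psum (big_cat_nat (leq0n a) le_ab) addrC addKr. Qed.

Lemma sum_ord_interval n x a b : (b < n)%N ->
  \sum_(i < n) (if (a <= i <= b)%N then x i else 0) = \sum_(a <= i < b.+1) x i.
Proof.
move=> lt_bn; rewrite -big_mkcond -(big_mkord (fun i => a <= i <= b)%N x).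
rewrite (big_nat_widen _ _ _ _ _ lt_bn) (big_nat_widenl _ _ _ _ _ (leq0n a)).
by apply: eq_bigl => i; rewrite ltnS; case: (a <= i)%N; case: (i <= b)%N.
Qed.

Definition diff_array m lo hi s (i : nat) :=
  \sum_(k < m) ((if lo k == i then s k else 0) - (if (hi k).+1 == i then s k else 0)).

Lemma diff_array0 lo hi s i : diff_array 0 lo hi s i = 0.
Proof. by rewrite /diff_array big_ord0. Qed.

Lemma diff_arrayS m lo hi s i : diff_array m.+1 lo hi s i = diff_array m lo hi s i +
  ((if lo m == i then s m else 0) - (if (hi m).+1 == i then s m else 0)).
Proof. by rewrite /diff_array big_ord_recr. Qed.

Lemma psum_diff_array m lo hi s j : (forall k, k < m -> lo k <= (hi k).+1)%N ->
  psum (diff_array m lo hi s) j.+1 =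
  \sum_(k < m) (if (lo k <= j <= hi k)%N then s k else 0).
Proof.
move=> lo_hi; rewrite /psum /diff_array exchange_big /=; apply: eq_bigr => k _.
rewrite sumrB -!(big_mkcond (fun i => _ == i)).
rewrite -!(eq_bigl _ _ (fun i => eq_sym i _)) !big_nat1_eq !ltnS.
have := lo_hi k (ltn_ord k); rewrite ltnNge.
by case: (leqP (lo k) j); case: (leqP j (hi k)); rewrite /= ?subrr ?subr0 //; lia.
Qed.

End PrefixSums.

Definition rect_coord (r : rect) (t : nat) : nat :=
  match t with 0 => ra r | 1 => rb r | 2 => rc r | _ => rd r end.

Definition rect_tr (r : rect) : rect := Rect (rc r) (rd r) (ra r) (rb r).

Lemma in_rect_tr r i j : in_rect (rect_tr r) i j = in_rect r j i.
Proof. by rewrite /in_rect /=; do 4 case: (_ <= _)%N. Qed.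

Lemma rect_decomp_tr n (M : 'M[bool]_n) rs :
  is_rect_decomp M rs -> is_rect_decomp (M^T) (map rect_tr rs).
Proof.
have nth_tr k : nth rect0 (map rect_tr rs) k = rect_tr (nth rect0 rs k).
  case: (ltnP k (size rs)) => [lt_k | le_k]; first by rewrite (nth_map rect0).
  by rewrite !nth_default ?size_map.
case=> [valid [ones [disj cover]]]; rewrite /is_rect_decomp size_map.
split; [|split; [|split]].
- by move=> k /valid; rewrite nth_tr => /and4P[? ? ? ?]; apply/and4P.
- by move=> k lt_k i j; rewrite nth_tr in_rect_tr mxE; apply: ones.
- by move=> k l lt_kl lt_l i j; rewrite !nth_tr !in_rect_tr; apply: disj.
- by move=> i j; rewrite mxE => /cover[k lt_k in_k]; exists k; rewrite // nth_tr in_rect_tr.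
Qed.

Lemma rect_decomp_entry (R : pzSemiRingType) n (M : 'M[bool]_n) rs :
  is_rect_decomp M rs ->
  forall i j : 'I_n, (M i j)%:R = \sum_(r <- rs) (in_rect r i j)%:R :> R.
Proof.
move=> [_ [ones [disj cover]]] i j; rewrite (big_nth rect0) big_mkord.
case Mij: (M i j); last first.
  by rewrite big1 // => k _; case in_k: in_rect => //; rewrite (ones k _ i j in_k) in Mij.
have [k0 lt_k0 in_k0] := cover i j Mij.
have unique_k k : in_rect (nth rect0 rs k) i j -> (k < size rs)%N -> k = k0.
  move=> in_k lt_k; case: (ltngtP k k0) => // [lt_kk0 | lt_k0k].
  - by have := disj _ _ lt_kk0 lt_k0 i j; rewrite in_k in_k0.
  - by have := disj _ _ lt_k0k lt_k i j; rewrite in_k in_k0.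
rewrite (bigD1 (Ordinal lt_k0)) //= in_k0 big1 ?addr0 // => k ne_k.
case in_k: in_rect => //; case/eqP: ne_k; apply: val_inj.
exact: unique_k in_k (ltn_ord k).
Qed.

Definition rect_contrib (V : zmodType) (src tgt : nat) (x : nat -> V) (j : nat) (r : rect) : V :=
  if (rect_coord r tgt <= j <= rect_coord r tgt.+1)%N
  then \sum_(rect_coord r src <= i < (rect_coord r src.+1).+1) x i else 0.

Lemma mulmx01_rect_decomp (R : realType) n (M : 'M[bool]_n) rs (v : 'cV[R]_n) (j : 'I_n) :
  is_rect_decomp M rs ->
  (mx01 R M *m v) j 0 = \sum_(r <- rs) rect_contrib 2 0 (real_input (fun i => v i 0)) j r.
Proof.
move=> Mrs; rewrite mxE.
under eq_bigr => i _ do rewrite mxE (rect_decomp_entry R Mrs) mulr_suml.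
rewrite exchange_big /= !(big_nth rect0) !big_mkord; apply: eq_bigr => k _.
have /and4P[_ _ _ lt_dn] := Mrs.1 k (ltn_ord k); set r := nth rect0 rs k in lt_dn *.
rewrite /rect_contrib /in_rect /=; case: (ra r <= j)%N; case: (j <= rb r)%N => /=;
  try by rewrite big1 // => i _; rewrite mul0r.
rewrite -(sum_ord_interval _ _ lt_dn); apply: eq_bigr => i _.
by rewrite /real_input valK mulr_natl; case: (rc r <= i <= rd r)%N; rewrite ?mulr1n ?mulr0n.
Qed.

Lemma tr_mulmx01_rect_decomp (R : realType) n (M : 'M[bool]_n) rs (v : 'cV[R]_n) (j : 'I_n) :
  is_rect_decomp M rs ->
  (v^T *m mx01 R M) 0 j = \sum_(r <- rs) rect_contrib 0 2 (real_input (fun i => v i 0)) j r.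
Proof.
move=> Mrs; have -> : (v^T *m mx01 R M) 0 j = (mx01 R (M^T) *m v) j 0.
  by rewrite !mxE; apply: eq_bigr => i _; rewrite !mxE mulrC.
by rewrite (mulmx01_rect_decomp _ _ (rect_decomp_tr Mrs)) big_map.
Qed.

Section Execution.
Variables (R : realType) (P : program).

Fixpoint steps (k : nat) (c : config R) : option (config R) :=
  if k is k'.+1 then (if step P c is Some c' then steps k' c' else None) else Some c.

Lemma stepsS k c : steps k.+1 c = if step P c is Some c' then steps k c' else None.
Proof. by []. Qed.

Lemma steps_cat k1 k2 c c1 c2 :
  steps k1 c = Some c1 -> steps k2 c1 = Some c2 -> steps (k1 + k2) c = Some c2.
Proof.
elim: k1 c => [|k IH] c /=; first by case=> ->.
by case: (step P c) => // c' /IH.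
Qed.

Lemma steps_run k c c' t :
  steps k c = Some c' -> step P c' = None -> (k <= t)%N -> run P t c = Some c'.
Proof.
elim: k c t => [|k IH] c t /=.
  by case=> -> halted _; case: t => [|t] /=; rewrite halted.
case step_c: (step P c) => [c1|] // run_c1 halted.
by case: t => [|t] //= le_kt; rewrite step_c; apply: IH.
Qed.

Lemma steps_iter (Inv : nat -> config R -> Prop) (L lo hi : nat) :
  (forall i c, (lo <= i < hi)%N -> Inv i c -> exists2 c', steps L c = Some c' & Inv i.+1 c') ->
  (lo <= hi)%N -> forall c, Inv lo c -> exists2 c', steps (L * (hi - lo)) c = Some c' & Inv hi c'.
Proof.
move=> body le_lo_hi c Inv_c.
suff: forall d, (d <= hi - lo)%N -> exists2 c', steps (L * d) c = Some c' & Inv (lo + d)%N c'.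
  by move/(_ _ (leqnn _)); rewrite subnKC.
elim=> [|d IH] le_d; first by exists c; rewrite ?muln0 ?addn0.
have [c1 run1 Inv1] := IH (ltnW le_d).
have [|c2 run2 Inv2] := body _ c1 _ Inv1; first lia.
by exists c2; rewrite ?addnS // mulnS addnC (steps_cat run1 run2).
Qed.

End Execution.

(* The rectangles are read as (lo, hi) = coordinates (src, src+1) for the summed range and
   (tgt, tgt+1) for the target range, so that rect_prog 2 0 computes M v and rect_prog 0 2
   computes v^T M.  With m rectangles and B = 4m + 12n, the nat cells 0..11 are registers,
   so the input is first copied to N[B+2 ..]; Re[0] and Re[1] are scratch registers,
   Re[n+2+k] receives the prefix sum v_0 + ... + v_(k-1) (k <= n) and Re[2n+3+x] the
   difference array (x <= n).  The first instruction halts at once exactly when n = 0: otherwise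
   N[2], the first coordinate of the first rectangle (or 0 if there is none), is below n.  The
   numbers in comments are instruction addresses, the targets of the jumps. *)
Definition rect_prog (src tgt : nat) : program := [::
  (* 0 *) JmpLe 0 2 99;
  (* 1: N[1] := B, N[B] := n, N[B+2] := N[2], N[B+3] := N[3] *)
  NAdd 1 1 0; NAdd 1 1 0; NAdd 1 1 0; NAdd 1 1 1; NAdd 1 1 1;
  NStore 1 0; NCst 0 2; NAdd 0 0 1; NStore 0 2; NCst 0 3; NAdd 0 0 1; NStore 0 3;
  (* 13: N[B+a] := N[a] for 4 <= a < B *)
  NCst 2 4; NCst 0 4; NAdd 3 1 0;
  (* 16 *) JmpLe 1 2 23; NLoad 0 2; NStore 3 0; NCst 0 1; NAdd 2 2 0; NAdd 3 3 0; JmpLe 0 0 16;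
  (* 23: N[9] := n, N[4] := B + 4m + 2, N[5..8] := n+2, n+3, 2n+3, 2n+4, Re[n+3] := v_0 *)
  NLoad 9 1; NAdd 4 9 9; NAdd 4 4 4; NAdd 5 4 4; NAdd 4 4 5; NSub 4 1 4;
  NCst 0 2; NAdd 4 4 0; NAdd 4 4 1; NAdd 5 9 0; NCst 0 3; NAdd 6 9 0;
  NAdd 7 9 9; NAdd 7 7 0; NCst 0 1; NAdd 8 7 0;
  NCst 0 0; NAdd 10 6 0; RStore 10 0;
  (* 42: prefix sums of v *)
  NCst 3 1;
  (* 43 *) JmpLe 9 3 51; RLoad 1 3; RAdd 0 0 1; NCst 0 1; NAdd 10 10 0; RStore 10 0;
  NAdd 3 3 0; JmpLe 0 0 43;
  (* 51: for each rectangle, Re[0] := its range sum, added at lo and subtracted at hi+1 *)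
  NCst 0 2; NAdd 3 1 0;
  (* 53 *) JmpLe 4 3 82;
  NCst 0 src.+1; NAdd 0 3 0; NLoad 0 0; NAdd 0 0 6; RLoad 0 0;
  NCst 0 src; NAdd 0 3 0; NLoad 0 0; NAdd 0 0 5; RLoad 1 0; RSub 0 0 1;
  NCst 0 tgt; NAdd 0 3 0; NLoad 0 0; NAdd 0 0 7; RLoad 1 0; RAdd 1 1 0; RStore 0 1;
  NCst 0 tgt.+1; NAdd 0 3 0; NLoad 0 0; NAdd 0 0 8; RLoad 1 0; RSub 1 1 0; RStore 0 1;
  NCst 0 4; NAdd 3 3 0; JmpLe 0 0 53;
  (* 82: prefix sums of the difference array, written in place and to Re[1 .. n) *)
  NCst 3 1; NCst 0 0; NAdd 10 8 0; NAdd 11 7 0;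
  (* 86 *) JmpLe 9 3 97; RLoad 0 11; RLoad 1 10; RAdd 0 0 1; RStore 10 0; RStore 3 0;
  NCst 0 1; NAdd 3 3 0; NAdd 10 10 0; NAdd 11 11 0; JmpLe 0 0 86;
  (* 97: the scratch registers Re[1], Re[0] get their final values *)
  RLoad 1 8; RLoad 0 7;
  (* 99 *) Halt].

Definition input_coord (N : nat -> nat) (k t : nat) : nat := N (2 + 4 * k + t)%N.

Arguments upd {T} f a v b /.
Arguments steps : simpl never.
Arguments input_coord : simpl never.

(* Symbolic execution: exec_step runs one instruction, and the chains of upd it produces are
   evaluated by deciding each address comparison with lia (simpl_addr) or, for a universally
   quantified address, by case analysis (case_addr). *)
Ltac exec_step := rewrite stepsS /step /=.

Ltac simpl_addr := repeat match goal with
  | |- context [?a == ?b] =>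
      let T := type of a in unify T nat;
      first [ rewrite (_ : (a == b) = false); last (apply/eqP; lia)
            | rewrite (_ : (a == b) = true); last (apply/eqP; lia) ]
  end.

Ltac case_addr := repeat (case: eqP => ?; try (exfalso; lia)); try done.

Lemma nat_input_coord n rs k t : (t < 4)%N -> (k < size rs)%N ->
  input_coord (nat_input n rs) k t = rect_coord (nth rect0 rs k) t.
Proof.
move=> lt_t lt_k; rewrite /input_coord /nat_input; simpl_addr.
have -> : (2 + 4 * k + t - 2 = k * 4 + t)%N by lia.
by rewrite divnMDl // divn_small // addn0 lt_k modnMDl modn_small.
Qed.

Section RectProgCorrect.
Variables (R : realType) (src tgt : nat) (N0 : nat -> nat) (X0 : nat -> R) (n m : nat).
Local Notation coord := (input_coord N0).
Hypotheses (src_lt3 : (src < 3)%N) (tgt_lt3 : (tgt < 3)%N) (n_gt0 : (0 < n)%N).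
Hypotheses (N0_0 : N0 0 = n) (N0_1 : N0 1 = m) (N0_2 : (N0 2 < n)%N).
Hypothesis X0_ge_n : forall i, (n <= i)%N -> X0 i = 0.
Hypothesis coord_bounds : forall k, (k < m)%N ->
  (coord k src <= coord k src.+1 < n)%N && (coord k tgt <= coord k tgt.+1 < n)%N.

Local Notation P := (rect_prog src tgt).
Local Notation B := (4 * m + 12 * n)%N.
Local Notation E := (4 * m + 2)%N.
Local Notation lo k := (coord k tgt).
Local Notation hi k := (coord k tgt.+1).
Local Notation rect_sum k := (psum X0 (coord k src.+1).+1 - psum X0 (coord k src)).
Local Notation diff k :=
  (diff_array k (fun k => lo k) (fun k => hi k) (fun k => rect_sum k)).

Definition copy_inv (a : nat) (c : config R) : Prop :=
  [/\ pc c = 16%N, rmem c = X0,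
      [/\ nmem c 1 = B, nmem c 2 = a, nmem c 3 = (B + a)%N & nmem c B = n],
      (forall i, (2 <= i < a)%N -> nmem c (B + i)%N = N0 i) &
      (forall i, (a <= i < B)%N -> nmem c i = N0 i)].

Lemma copy_init : exists2 c, steps P 16 (Cfg 0 N0 X0) = Some c & copy_inv 4 c.
Proof.
have n_pos := n_gt0.
exec_step; rewrite N0_0 leqNgt N0_2 /=.
do 15 exec_step; rewrite /steps.
eexists; first reflexivity.
rewrite N0_0 N0_1; split => /=; simpl_addr => //.
- by split; simpl_addr; lia.
- by move=> i lt_i; simpl_addr; case_addr; congr N0; lia.
- by move=> i lt_i; simpl_addr; case_addr; congr N0; lia.
Qed.

Lemma copy_step a c : (4 <= a < B)%N -> copy_inv a c ->
  exists2 c', steps P 7 c = Some c' & copy_inv a.+1 c'.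
Proof.
case: c => p N X /andP[le4a lt_aB] [/= -> -> [N1 N2 N3 NB] copied pending].
exec_step; rewrite N1 N2 leqNgt lt_aB /=.
do 6 exec_step; rewrite /steps.
eexists; first reflexivity.
rewrite N2 N3; split => //=; simpl_addr.
- by split; simpl_addr; rewrite ?NB //; lia.
- move=> i lt_i; simpl_addr; case_addr; last by apply: copied; lia.
  have -> : i = a by lia.
  by rewrite pending // leqnn.
- by move=> i lt_i; simpl_addr; case_addr; apply: pending; lia.
Qed.

Definition regs (N : nat -> nat) : Prop :=
  [/\ N 1 = B, N 4 = (B + E)%N, N 5 = (n + 2)%N, N 6 = (n + 3)%N &
      [/\ N 7 = (n + n + 3)%N, N 8 = (n + n + 4)%N & N 9 = n]].

Definition input_copied (N : nat -> nat) : Prop :=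
  forall i, (2 <= i < E)%N -> N (B + i)%N = N0 i.

Definition prefix_inv (i : nat) (c : config R) : Prop :=
  [/\ pc c = 43%N, regs (nmem c), input_copied (nmem c),
      nmem c 3 = i /\ nmem c 10 = (n + 2 + i)%N &
      [/\ rmem c 0 = psum X0 i,
          forall k, (k <= i)%N -> rmem c (n + 2 + k)%N = psum X0 k,
          forall k, (i <= k < n)%N -> rmem c k = X0 k &
          forall x, (x <= n)%N -> rmem c (n + n + 3 + x)%N = 0]].

Lemma prefix_init c : copy_inv B c -> exists2 c', steps P 21 c = Some c' & prefix_inv 1 c'.
Proof.
have n_pos := n_gt0.
case: c => p N X [/= -> -> [N1 N2 N3 NB] copied _].
exec_step; rewrite N1 N2 leqnn.
do 20 exec_step; rewrite /steps.
eexists; first reflexivity.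
rewrite /prefix_inv /regs /input_copied /= N1 NB; split => //.
- by repeat split; simpl_addr; rewrite ?N1; lia.
- by move=> i lt_i; simpl_addr; rewrite copied //; lia.
- by split; simpl_addr; lia.
split; simpl_addr.
- by rewrite psumS psum0 add0r.
- move=> k le_k1; simpl_addr; case_addr.
  + have -> : k = 1%N by lia.
    by rewrite psumS psum0 add0r.
  + have -> : k = 0%N by lia.
    by rewrite psum0 X0_ge_n //; lia.
- by move=> k lt_k; simpl_addr; case_addr.
- by move=> x le_x; simpl_addr; case_addr; apply: X0_ge_n; lia.
Qed.

Lemma prefix_step i c : (1 <= i < n)%N -> prefix_inv i c ->
  exists2 c', steps P 8 c = Some c' & prefix_inv i.+1 c'.
Proof.
have n_pos := n_gt0.
case: c => p N X /andP[le1i lt_in].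
case=> /= -> [N1 N4 N5 N6 [N7 N8 N9]] copied [N3 N10] [X0_sum psumX pendingX zeroX].
exec_step; rewrite N9 N3 leqNgt lt_in /=.
do 7 exec_step; rewrite /steps.
eexists; first reflexivity.
rewrite /prefix_inv /regs /input_copied /= N3 N10; split => //.
- by move=> a lt_a; simpl_addr; apply: copied.
- by split; simpl_addr; lia.
split; simpl_addr.
- by rewrite psumS X0_sum pendingX //; lia.
- move=> k le_k; simpl_addr; case_addr; last by apply: psumX; lia.
  have -> : k = i.+1 by lia.
  by rewrite psumS X0_sum pendingX //; lia.
- by move=> k lt_k; simpl_addr; case_addr; apply: pendingX; lia.
- by move=> x le_x; simpl_addr; case_addr; apply: zeroX; lia.
Qed.

Definition diff_inv (k : nat) (c : config R) : Prop :=
  [/\ pc c = 53%N, regs (nmem c), input_copied (nmem c), nmem c 3 = (B + 2 + 4 * k)%N &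
      (forall i, (i <= n)%N -> rmem c (n + 2 + i)%N = psum X0 i) /\
      (forall x, (x <= n)%N -> rmem c (n + n + 3 + x)%N = diff k x)].

Lemma diff_init c : prefix_inv n c -> exists2 c', steps P 3 c = Some c' & diff_inv 0 c'.
Proof.
have n_pos := n_gt0.
case: c => p N X.
case=> /= -> [N1 N4 N5 N6 [N7 N8 N9]] copied [N3 N10] [_ psumX _ zeroX].
exec_step; rewrite N9 N3 leqnn /=.
do 2 exec_step; rewrite /steps.
eexists; first reflexivity.
rewrite /diff_inv /regs /input_copied /=; split.
- by [].
- by repeat split; simpl_addr; rewrite ?N1 ?N4 ?N5 ?N6 ?N7 ?N8 ?N9.
- by move=> i lt_i; simpl_addr; apply: copied.
- by rewrite N1; lia.
split => x le_x; first exact: psumX.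
by rewrite zeroX // diff_array0.
Qed.

Lemma diff_step k c : (0 <= k < m)%N -> diff_inv k c ->
  exists2 c', steps P 29 c = Some c' & diff_inv k.+1 c'.
Proof.
have n_pos := n_gt0.
have [src_lt4 src1_lt4 tgt_lt4 tgt1_lt4] :
  [/\ src < 4, src.+1 < 4, tgt < 4 & tgt.+1 < 4]%N by split; lia.
case: c => p N X /andP[_ lt_km].
case=> /= -> [N1 N4 N5 N6 [N7 N8 N9]] copied N3 [psumX diffX].
have /andP[/andP[src_le src_lt] /andP[lo_le_hi hi_lt]] := coord_bounds lt_km.
have coordE t : (t < 4)%N -> N (B + 2 + 4 * k + t)%N = coord k t.
  move=> lt_t; rewrite (_ : (B + 2 + 4 * k + t = B + (2 + 4 * k + t))%N); last lia.
  by rewrite copied //; lia.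
exec_step; rewrite N4 N3 (_ : (B + E <= B + 2 + 4 * k)%N = false) /=; last lia.
do 28 (exec_step; rewrite ?N3; simpl_addr; rewrite ?coordE //).
rewrite /steps.
eexists; first reflexivity.
rewrite /diff_inv /regs /input_copied /= ?N3.
simpl_addr.
rewrite ?coordE // ?N5 ?N6 ?N7 ?N8.
split.
- by [].
- by repeat split; rewrite ?N1 ?N4 ?N9.
- by move=> a lt_a; simpl_addr; apply: copied.
- lia.
split => x le_x; simpl_addr; first exact: psumX.
have sumE : X (coord k src.+1 + (n + 3))%N - X (coord k src + (n + 2))%N = rect_sum k.
  rewrite (_ : (coord k src.+1 + (n + 3) = n + 2 + (coord k src.+1).+1)%N); last lia.
  rewrite (_ : (coord k src + (n + 2) = n + 2 + coord k src)%N); last lia.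
  by rewrite !psumX //; lia.
rewrite sumE; case_addr; rewrite diff_arrayS /=.
- have -> : x = (hi k).+1 by lia.
  rewrite (_ : (hi k + (n + n + 4) = n + n + 3 + (hi k).+1)%N); last lia.
  by rewrite diffX; [simpl_addr; rewrite sub0r | lia].
- have -> : x = lo k by lia.
  rewrite (_ : (lo k + (n + n + 3) = n + n + 3 + lo k)%N); last lia.
  by rewrite diffX; [simpl_addr; rewrite subr0 | lia].
- by rewrite diffX; [simpl_addr; rewrite subr0 addr0 | lia].
Qed.

Definition output_inv (i : nat) (c : config R) : Prop :=
  [/\ pc c = 86%N,
      [/\ nmem c 3 = i, nmem c 7 = (n + n + 3)%N, nmem c 8 = (n + n + 4)%N & nmem c 9 = n] /\
      nmem c 10 = (n + n + 3 + i)%N /\ nmem c 11 = (n + n + 2 + i)%N,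
      (forall x, (x < i)%N -> rmem c (n + n + 3 + x)%N = psum (diff m) x.+1),
      (forall x, (i <= x <= n)%N -> rmem c (n + n + 3 + x)%N = diff m x) &
      (forall x, (2 <= x < i)%N -> rmem c x = psum (diff m) x.+1)].

Lemma output_init c : diff_inv m c -> exists2 c', steps P 5 c = Some c' & output_inv 1 c'.
Proof.
case: c => p N X.
case=> /= -> [N1 N4 N5 N6 [N7 N8 N9]] copied N3 [_ diffX].
exec_step; rewrite N4 N3 (_ : (B + E <= B + 2 + 4 * m)%N) /=; last lia.
do 4 exec_step; rewrite /steps.
eexists; first reflexivity.
rewrite /output_inv /=; split.
- by [].
- by rewrite N7 N8 N9; split; [split | split]; lia.
- move=> x lt_x1; have -> : x = 0%N by lia.
  by rewrite psumS psum0 add0r diffX.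
- by move=> x le_x; apply: diffX; lia.
- by move=> x; lia.
Qed.

Lemma output_step i c : (1 <= i < n)%N -> output_inv i c ->
  exists2 c', steps P 11 c = Some c' & output_inv i.+1 c'.
Proof.
case: c => p N X /andP[le1i lt_in].
case=> /= -> [[N3 N7 N8 N9] [N10 N11]] done_out pending_out written_out.
exec_step; rewrite N9 N3 leqNgt lt_in /=.
do 10 exec_step; rewrite /steps.
eexists; first reflexivity.
rewrite /output_inv /= ?N3 ?N10 ?N11; simpl_addr.
have next_out : X (n + n + 2 + i)%N + X (n + n + 3 + i)%N = psum (diff m) i.+1.
  rewrite (_ : (n + n + 2 + i = n + n + 3 + i.-1)%N); last lia.
  rewrite done_out; last lia.
  rewrite pending_out; last lia.
  by rewrite prednK // psumS.
split.
- by [].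
- by rewrite N7 N8 N9; split; [split | split]; lia.
- move=> x lt_x; simpl_addr; case_addr; last by apply: done_out; lia.
  by rewrite (_ : x = i) //; lia.
- by move=> x le_x; simpl_addr; case_addr; apply: pending_out; lia.
- move=> x lt_x; simpl_addr; case_addr; last by apply: written_out; lia.
  by subst x.
Qed.

Lemma output_exit c : output_inv n c ->
  exists2 c', steps P 3 c = Some c' &
    step P c' = None /\ forall j, (j < n)%N -> rmem c' j = psum (diff m) j.+1.
Proof.
have n_pos := n_gt0.
case: c => p N X.
case=> /= -> [[N3 N7 N8 N9] [N10 N11]] done_out pending_out written_out.
exec_step; rewrite N9 N3 leqnn /=.
do 2 exec_step; rewrite /steps.
eexists; first reflexivity.
split; first by [].
move=> j lt_jn /=; rewrite N7 N8.
case: j lt_jn => [|[|j]] lt_jn /=; simpl_addr.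
- by rewrite (_ : (n + n + 3 = n + n + 3 + 0)%N) ?done_out //; lia.
- by rewrite (_ : (n + n + 4 = n + n + 3 + 1)%N) ?done_out //; lia.
- by apply: written_out; lia.
Qed.

Theorem rect_prog_correct :
  exists2 c, run P (110 * (n + m) + 110) (Cfg 0 N0 X0) = Some c &
    forall j, (j < n)%N -> rmem c j =
      \sum_(k < m) (if (lo k <= j <= hi k)%N
                    then \sum_(coord k src <= i < (coord k src.+1).+1) X0 i else 0).
Proof.
have n_pos := n_gt0.
have [c1 run1 inv1] := copy_init.
have [|c2 run2 inv2] := steps_iter copy_step _ inv1; first lia.
have [c3 run3 inv3] := prefix_init inv2.
have [c4 run4 inv4] := steps_iter prefix_step n_gt0 inv3.
have [c5 run5 inv5] := diff_init inv4.
have [c6 run6 inv6] := steps_iter diff_step (leq0n m) inv5.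
have [c7 run7 inv7] := output_init inv6.
have [c8 run8 inv8] := steps_iter output_step n_gt0 inv7.
have [c9 run9 [halted out]] := output_exit inv8.
exists c9.
  apply: (steps_run (steps_cat run1 (steps_cat run2 (steps_cat run3 (steps_cat run4
    (steps_cat run5 (steps_cat run6 (steps_cat run7 (steps_cat run8 run9)))))))) halted).
  lia.
move=> j lt_jn; rewrite out // psum_diff_array => [|k lt_km]; last first.
  by have /and3P[_ ? _] := coord_bounds lt_km; lia.
apply: eq_bigr => k _; rewrite psumB //.
by have /andP[/andP[? _] _] := coord_bounds (ltn_ord k); lia.
Qed.

End RectProgCorrect.

Lemma rect_prog_spec (R : realType) src tgt n (M : 'M[bool]_n) rs (x : 'I_n -> R) :
  src \in [:: 0; 2]%N -> tgt \in [:: 0; 2]%N -> (0 < n)%N -> is_rect_decomp M rs ->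
  exists2 c, run (rect_prog src tgt) (110 * (n + size rs) + 110) (init rs x) = Some c &
    forall j : 'I_n, rmem c j = \sum_(r <- rs) rect_contrib src tgt (real_input x) j r.
Proof.
move=> src02 tgt02 n_gt0 [valid _].
have coord_bounds t k : t \in [:: 0; 2]%N -> (k < size rs)%N ->
    (rect_coord (nth rect0 rs k) t <= rect_coord (nth rect0 rs k) t.+1 < n)%N.
  by rewrite !inE => /orP[] /eqP-> /valid /and4P[? ? ? ?]; apply/andP.
have lt3 t : t \in [:: 0; 2]%N -> (t < 3)%N by rewrite !inE => /orP[] /eqP->.
have [src_lt3 tgt_lt3] := (lt3 _ src02, lt3 _ tgt02).
have first_lt : (nat_input n rs 2 < n)%N.
  rewrite /nat_input /= subnn div0n; case: ifP => // nonempty.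
  by have /and4P[? ? _ _] := valid 0%N nonempty; lia.
have x_ge_n i : (n <= i)%N -> real_input x i = 0.
  by move=> le_ni; rewrite /real_input insubN // -leqNgt.
have [|c run_c out_c] := @rect_prog_correct R src tgt (nat_input n rs) (real_input x) n
  (size rs) src_lt3 tgt_lt3 n_gt0 erefl erefl first_lt x_ge_n.
  move=> k lt_k; rewrite !nat_input_coord ?coord_bounds //; lia.
exists c => // j; rewrite out_c // (big_nth rect0) big_mkord; apply: eq_bigr => k _.
by rewrite /rect_contrib !nat_input_coord //; lia.
Qed.

Lemma rect_prog_empty (R : realType) src tgt rs (x : 'I_0 -> R) t : (0 < t)%N ->
  exists c, run (rect_prog src tgt) t (init rs x) = Some c.
Proof.
move=> t_gt0; exists (Cfg 99 (nat_input 0 rs) (real_input x)).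
by apply: (@steps_run _ _ 1) => //; rewrite /init; exec_step.
Qed.

Theorem lemma2 :
  exists (PMv PvM : program) (C : nat),
    forall (R : realType) (n : nat) (M : 'M[bool]_n) (rs : seq rect),
      is_rect_decomp M rs ->
      forall v : 'cV[R]_n,
        (exists c, run PMv (C * (n + size rs) + C)%N (init rs (fun i => v i 0)) = Some c
            /\ forall j : 'I_n, rmem c j = (mx01 R M *m v) j 0)
        /\
        (exists c, run PvM (C * (n + size rs) + C)%N (init rs (fun i => v i 0)) = Some c
            /\ forall j : 'I_n, rmem c j = (v^T *m mx01 R M) 0 j).
Proof.
exists (rect_prog 2 0), (rect_prog 0 2), 110%N => R n M rs Mrs v.
have [n0 | n_gt0] := posnP n.
  subst n; have t_gt0 : (0 < 110 * (0 + size rs) + 110)%N by rewrite addn_gt0 orbT.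
  split.
  - have [c run_c] := rect_prog_empty 2 0 rs (fun i => v i 0) t_gt0.
    by exists c; split => // -[].
  - have [c run_c] := rect_prog_empty 0 2 rs (fun i => v i 0) t_gt0.
    by exists c; split => // -[].
split.
- have [c run_c out_c] :=
    rect_prog_spec (src := 2) (tgt := 0) (fun i => v i 0) isT isT n_gt0 Mrs.
  by exists c; split => // j; rewrite out_c (mulmx01_rect_decomp _ _ Mrs).
- have [c run_c out_c] :=
    rect_prog_spec (src := 0) (tgt := 2) (fun i => v i 0) isT isT n_gt0 Mrs.
  by exists c; split => // j; rewrite out_c (tr_mulmx01_rect_decomp _ _ Mrs).
Qed.
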